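(* Let $n\ge1$. For every $\sigma\in\mathfrak{S}_{n+1}$, $\psi_{FV}(\sigma)=\psi_{YZL}(\Psi(\sigma))$.
   Context: For $\sigma\in\mathfrak{S}_{n+1}$ define $\psi_{FV}(\sigma)=(s_1\cdots s_n,(p_1,\dots,p_n))$ where, with convention $\sigma(0)=\sigma(n+2)=0$ and peaks/valleys/double ascents/double descents being values $\sigma(i)$ with $\sigma(i-1)<\sigma(i)>\sigma(i+1)$ / $\sigma(i-1)>\sigma(i)<\sigma(i+1)$ / $\sigma(i-1)<\sigma(i)<\sigma(i+1)$ / $\sigma(i-1)>\sigma(i)>\sigma(i+1)$: $s_i=\textsc{U}$ if the value $i$ is a valley, $\textsc{D}$ if a peak, $\textsc{L}_b$ if a double ascent, $\textsc{L}_r$ if a double descent; and $p_i=\#\{j: \sigma^{-1}(i)<j<n+1,\ \sigma(j)<i<\sigma(j+1)\}$. Define $\psi_{YZL}(\sigma)=(s_1\cdots s_n,(p_1,\dots,p_n))$ by $s_i=\textsc{U}$ if $i<\sigma(i)$ and $i+1\le\sigma^{-1}(i+1)$; $s_i=\textsc{D}$ if $i\ge\sigma(i)$ and $i+1>\sigma^{-1}(i+1)$; $s_i=\textsc{L}_b$ if $i<\sigma(i)$ and $i+1>\sigma^{-1}(i+1)$; $s_i=\textsc{L}_r$ if $i\ge\sigma(i)$ and $i+1\le\sigma^{-1}(i+1)$; and $p_i=\mathsf{nest}_i\sigma=\#\{j:j<i<\sigma(i)<\sigma(j)\text{ or }\sigma(j)<\sigma(i)\le i<j\}$. The map $\Phi:\mathfrak{S}_m\to\mathfrak{S}_m$: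 for $\rho\in\mathfrak{S}_m$, a letter $\rho(i)$ is a descent top if $i\le m-1$ and $\rho(i)>\rho(i+1)$, a descent bottom if $i\ge2$ and $\rho(i-1)>\rho(i)$; otherwise a nondescent top (resp. bottom). For $x=\rho(i)$ let $c(x)=\#\{j:i<j<m,\ \rho(j+1)<x<\rho(j)\}$. Let $f$ (resp. $g$) be the increasing word of descent bottoms (resp. nondescent bottoms); $f'$ the arrangement of descent tops in which each letter $x$ has exactly $c(x)$ larger letters to its left; $g'$ the arrangement of nondescent tops in which each letter $x$ has exactly $c(x)$ smaller letters to its right. With the two-row array of top row $fg$ and bottom row $f'g'$, $\Phi(\rho)=\tau$ where $\tau(b)=a$ for each column (top $a$, bottom $b$). The map $\Psi:\mathfrak{S}_m\to\mathfrak{S}_m$: $\hat\rho\in\mathfrak{S}_{m+1}$ is $\hat\rho(i)=\rho(i)+1$ ($i\le m$), $\hat\rho(m+1)=1$; $\tau=\Phi(\hat\rho)$ satisfies $\tau(1)=m+1$, and $\Psi(\rho)=\tau(2)\cdots\tau(m+1)$. Here $\Psi$ is applied with $m=n+1$. *)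

(* Permutations of {1..m} are words w : seq nat with
   perm_eq w (iota 1 m); w(i) := nth 0 w (i-1) for 1 <= i <= m, and 0 otherwise
   (this implements the convention sigma(0) = sigma(m+1) = 0). *)
From mathcomp Require Import all_boot.
Set Implicit Arguments. Unset Strict Implicit. Unset Printing Implicit Defensive.

Inductive step := U | D | Lb | Lr.

Definition val (w : seq nat) (i : nat) : nat :=
  if i is 0 then 0 else nth 0 w i.-1.

Definition pos (w : seq nat) (x : nat) : nat := (index x w).+1.

Definition stepFV (w : seq nat) (i : nat) : step :=
  let k := pos w i in
  let a := val w k.-1 in
  let b := val w k.+1 in
  if (a < i) && (i > b) then D
  else if (a > i) && (i < b) then U
  else if (a < i) && (i < b) then Lb
  else Lr.

Definition pFV (n : nat) (w : seq nat) (i : nat) : nat :=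
  count (fun j => (pos w i < j < n.+1) && (val w j < i < val w j.+1))
        (iota 0 n.+2).

Definition psiFV (n : nat) (w : seq nat) : seq step * seq nat :=
  ([seq stepFV w i | i <- iota 1 n], [seq pFV n w i | i <- iota 1 n]).

Definition stepYZL (w : seq nat) (i : nat) : step :=
  let a := i < val w i in
  let b := i.+1 <= pos w i.+1 in
  if a && b then U
  else if ~~ a && ~~ b then D
  else if a && ~~ b then Lb
  else Lr.

Definition nest (n : nat) (w : seq nat) (i : nat) : nat :=
  count (fun j => ((j < i) && (i < val w i) && (val w i < val w j))
               || ((val w j < val w i) && (val w i <= i) && (i < j)))
        (iota 1 n.+1).

Definition psiYZL (n : nat) (w : seq nat) : seq step * seq nat :=
  ([seq stepYZL w i | i <- iota 1 n], [seq nest n w i | i <- iota 1 n]).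

Section PhiDef.
Variable rho : seq nat.
Let m := size rho.

Definition dtopP (i : nat) : bool := (i <= m.-1) && (val rho i > val rho i.+1).
Definition dbotP (i : nat) : bool := (2 <= i) && (val rho i.-1 > val rho i).

Definition cstat (x : nat) : nat :=
  let i := pos rho x in
  count (fun j => (i < j < m) && (val rho j.+1 < x < val rho j)) (iota 0 m).

Definition dtops : seq nat := [seq val rho i | i <- iota 1 m & dtopP i].
Definition ndtops : seq nat := [seq val rho i | i <- iota 1 m & ~~ dtopP i].

Definition fword : seq nat := sort leq [seq val rho i | i <- iota 1 m & dbotP i].
Definition gword : seq nat := sort leq [seq val rho i | i <- iota 1 m & ~~ dbotP i].

(* f' : the arrangement of descent tops in which each letter x has exactly
   c(x) larger letters to its left *)
Definition fword' : seq nat :=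
  head [::] [seq t <- permutations dtops |
             all (fun x => count (fun y => x < y) (take (index x t) t) == cstat x) t].

(* g' : the arrangement of nondescent tops in which each letter x has exactly
   c(x) smaller letters to its right *)
Definition gword' : seq nat :=
  head [::] [seq t <- permutations ndtops |
             all (fun x => count (fun y => y < x) (drop (index x t).+1 t) == cstat x) t].

(* tau(b) = a for each column (top a, bottom b) of the array (fg / f'g') *)
Definition Phi : seq nat :=
  [seq nth 0 (fword ++ gword) (index b (fword' ++ gword')) | b <- iota 1 m].
End PhiDef.

(* Psi : rho-hat = (rho+1) 1 ; Psi rho = tau(2) ... tau(m+1) with tau = Phi rho-hat *)
Definition rhohat (rho : seq nat) : seq nat := rcons [seq x.+1 | x <- rho] 1.
Definition Psi (rho : seq nat) : seq nat := behead (Phi (rhohat rho)).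

(* Let rho be sigma with every letter raised by one and the letter 1 appended, and tau
   = Phi rho, so that Psi sigma = tau(2) ... tau(n+2).  In the two-row array defining
   Phi, the top letter of a column is smaller than the bottom one exactly in the part
   of the descent tops: tau x < x iff x is a descent top of rho, and tau^-1 x > x iff x
   is a descent bottom.  Both follow by counting the letters below a given y, comparing
   the defining property of f' and g' with bounds on c(y) that come from the crossings
   of level y by rho (which ends with 1, below every y >= 2).  These two equivalences
   turn the excedance conditions defining the steps of psi_YZL (Psi sigma) into the
   type of i+1 in rho (peak, valley, double ascent or double descent), which is the
   type of i in sigma.  As for the weights, p_i and nest_i (Psi sigma) both equal
   c(i+1), minus one when i+1 is not a descent top: for p_i because the up- and
   down-crossings of level i+1 after its position balance, and for nest_i because f
   and g are increasing, so that the nestings can be read off the array column by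
   column, where they are counted by the defining property of f' and g'. *)

From Pilot Require Import Defs.
From mathcomp Require Import all_boot zify.
Set Implicit Arguments. Unset Strict Implicit. Unset Printing Implicit Defensive.

Lemma count_sumE (T : Type) (a : pred T) (s : seq T) : count a s = \sum_(x <- s) a x.
Proof. by elim: s => [|x s IH]; rewrite ?big_nil ?big_cons //= IH. Qed.

Lemma count_nth (T : Type) (x0 : T) (P : pred T) (s : seq T) :
  count P s = count (fun j => P (nth x0 s j)) (iota 0 (size s)).
Proof. by rewrite -{1}(mkseq_nth x0 s) /mkseq count_map. Qed.

Lemma count_take_nth (T : Type) (x0 : T) (P : pred T) (s : seq T) d : d <= size s ->
  count P (take d s) = count (fun j => P (nth x0 s j)) (iota 0 d).
Proof.
move=> hd; rewrite -{1}(mkseq_nth x0 s) /mkseq -map_take count_map take_iota.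
by rewrite (minn_idPl hd).
Qed.

Lemma count_drop_nth (T : Type) (x0 : T) (P : pred T) (s : seq T) d :
  count P (drop d s) = count (fun j => P (nth x0 s j)) (iota d (size s - d)).
Proof. by rewrite -{1}(mkseq_nth x0 s) /mkseq -map_drop count_map drop_iota. Qed.

Lemma count_iota_geq (P : pred nat) a b d : a <= d <= a + b ->
  count (fun j => (d <= j) && P j) (iota a b) = count P (iota d (a + b - d)).
Proof.
move=> hd; rewrite {1}(_ : b = (d - a) + (a + b - d)); last by lia.
rewrite iotaD count_cat (_ : a + (d - a) = d); last by lia.
rewrite [X in X + _](@eq_in_count _ _ pred0) ?count_pred0 ?add0n; last first.
  by move=> j; rewrite mem_iota => hj; apply/negbTE; lia.
by apply: eq_in_count => j; rewrite mem_iota => /andP [-> _].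
Qed.

Lemma count_iota_ltn (P : pred nat) a b d : a <= d <= a + b ->
  count (fun j => (j < d) && P j) (iota a b) = count P (iota a (d - a)).
Proof.
move=> hd; rewrite {1}(_ : b = (d - a) + (a + b - d)); last by lia.
rewrite iotaD count_cat [X in _ + X](@eq_in_count _ _ pred0) ?count_pred0 ?addn0; last first.
  by move=> j; rewrite mem_iota => hj; apply/negbTE; lia.
by apply: eq_in_count => j; rewrite mem_iota => hj; have -> : j < d by lia.
Qed.

Lemma iotaS_map m k : iota m.+1 k = map succn (iota m k).
Proof. by rewrite -add1n iotaDl. Qed.

Lemma iota_cons m k : iota m k.+1 = m :: map succn (iota m k).
Proof. by rewrite /= iotaS_map. Qed.

Lemma iota_rcons m k : iota m k.+1 = rcons (iota m k) (m + k).
Proof. by rewrite -addn1 iotaD cats1. Qed.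

Lemma count_up_down_crossings (v : nat -> nat) y a d :
  count (fun j => (v j < y) && (y <= v j.+1)) (iota a d) + (y <= v a) =
  count (fun j => (v j.+1 < y) && (y <= v j)) (iota a d) + (y <= v (a + d)).
Proof.
elim: d a => [|d IH] a /=; first by rewrite addn0.
have := IH a.+1; rewrite addSnnS.
by case: (leqP y (v a)); case: (leqP y (v a.+1)) => /=; lia.
Qed.

Lemma size_count_gtn_ltn (s : seq nat) y : y \notin s ->
  size s = count (fun z => y < z) s + count (fun z => z < y) s.
Proof.
elim: s => [|x s IH] //=; rewrite in_cons negb_or => /andP [hx /IH ->].
by case: (ltngtP y x) => h /=; [lia | lia | rewrite h eqxx in hx].
Qed.

Lemma sorted_ltn_nthE (s : seq nat) q q' : sorted ltn s -> q < size s -> q' < size s ->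
  (nth 0 s q < nth 0 s q') = (q < q').
Proof.
move=> hs hq hq'; have mono := sorted_ltn_nth ltn_trans 0 hs.
case: (ltngtP q q') => h; first exact: mono.
  by apply/negbTE; rewrite -leqNgt ltnW //; apply: mono.
by rewrite h ltnn.
Qed.

Lemma sorted_nth_ltn_count (s : seq nat) q y : sorted ltn s -> q < size s ->
  (nth 0 s q < y) = (q < count (fun z => z < y) s).
Proof.
elim: s q => [|a s IH] q //= hs hq; have hs' := path_sorted hs.
have /allP gt_a : all (fun z => a < z) s by move: hs; rewrite (path_sortedE ltn_trans) => /andP [].
have [hay|hay] := ltnP a y.
  by case: q hq => [|q] hq /=; rewrite ?hay ?(IH q hs' hq) ?add1n ?ltnS.
have -> : count (fun z => z < y) s = 0.
  by apply/eqP; rewrite eqn0Ngt -has_count; apply/hasPn => z /gt_a /=; lia.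
case: q hq => [|q] /= hq; first by rewrite ltnNge hay.
by apply/negbTE; rewrite -leqNgt; have /= := gt_a _ (mem_nth 0 hq); lia.
Qed.

Lemma take_index_cons (T : eqType) (t : seq T) x : x \in t ->
  t = take (index x t) t ++ x :: drop (index x t).+1 t.
Proof.
move=> hx; have := drop_nth x (_ : index x t < size t); rewrite index_mem => /(_ hx).
by rewrite nth_index // => <-; rewrite cat_take_drop.
Qed.

Lemma head_filter (T : eqType) (p : pred T) (d : T) (s : seq T) : has p s ->
  p (head d [seq x <- s | p x]) && (head d [seq x <- s | p x] \in s).
Proof.
by rewrite has_filter -mem_filter; case: [seq x <- s | p x] => //= h l _; apply: mem_head.
Qed.

Lemma notin_take_index (T : eqType) (x : T) (s : seq T) : x \notin take (index x s) s.
Proof.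
elim: s => //= y s IH; case: eqVneq => [//|yx] /=.
by rewrite in_cons negb_or IH andbT eq_sym.
Qed.

Lemma sorted_leq_last (s : seq nat) x : sorted ltn s -> x \in s -> x <= last 0 s.
Proof.
elim: s x => [|a [|b s] IH] x //=; first by rewrite inE => _ /eqP ->.
move=> /andP [ab hs]; rewrite in_cons => /predU1P [->|xs]; last exact: IH.
by have := IH b hs (mem_head _ _); rewrite /=; lia.
Qed.

Lemma last_in_drop_index (T : eqType) (x0 x : T) (s : seq T) : x \in s ->
  last x0 s != x -> last x0 s \in drop (index x s).+1 s.
Proof.
move=> xs; rewrite {1 2}(take_index_cons xs) last_cat /=.
by case: (drop _ _) => [|y d] /=; rewrite ?eqxx // => _; apply: mem_last.
Qed.

Lemma count_predD1 (T : eqType) (P : pred T) (s : seq T) y0 : uniq s -> y0 \in s -> P y0 ->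
  count (fun y => (y != y0) && P y) s = (count P s).-1.
Proof.
move=> us ys Py0; rewrite (permP (perm_to_rem ys) P) /= Py0 rem_filter // count_filter.
by apply: eq_count => y; rewrite /= andbC.
Qed.

Section Arrangement.
Variables (T : eqType) (R : rel T) (c : T -> nat).
Hypotheses (R_irr : irreflexive R) (R_trans : transitive R)
  (R_total : forall x y, x != y -> R x y || R y x).

Definition arranged (t : seq T) := forall u x w, t = u ++ x :: w -> count (R x) u = c x.

Lemma arranged_take_index t : arranged t ->
  {in t, forall x, count (R x) (take (index x t) t) = c x}.
Proof. by move=> ht x /take_index_cons /ht. Qed.

Lemma arranged_rev_drop_index t : arranged t ->
  {in rev t, forall x, count (R x) (drop (index x (rev t)).+1 (rev t)) = c x}.
Proof.
move=> ht x /take_index_cons e; rewrite -count_rev.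
apply: (ht _ _ (rev (take (index x (rev t)) (rev t)))).
by rewrite -{1}(revK t) {1}e rev_cat rev_cons cat_rcons.
Qed.

Lemma exists_Rmin (S : seq T) : S != [::] ->
  exists2 z, z \in S & forall y, y \in S -> y != z -> R z y.
Proof.
elim: S => [|a [|b S] IH] // _.
  by exists a => [|y]; rewrite ?mem_head // inE => /eqP ->; rewrite eqxx.
have [z zS zmin] := IH isT.
case: (eqVneq a z) => [az|/R_total /orP [Raz|Rza]].
- exists z => [|y]; first by rewrite in_cons zS orbT.
  by rewrite in_cons => /predU1P [->|]; [rewrite az eqxx | apply: zmin].
- exists a => [|y]; first exact: mem_head.
  rewrite in_cons => /predU1P [->|yS]; first by rewrite eqxx.
  by case: (eqVneq y z) => [-> //|yz] _; apply: R_trans (zmin y yS yz).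
- exists z => [|y]; first by rewrite in_cons zS orbT.
  by rewrite in_cons => /predU1P [-> _ //|]; apply: zmin.
Qed.

Lemma arranged_insert (t : seq T) z : arranged t -> z \notin t ->
  (forall y, y \in t -> R z y) -> c z <= size t ->
  arranged (take (c z) t ++ z :: drop (c z) t).
Proof.
move=> ht zt zmin czt u x w e.
have mem_t y : y \in u ++ x :: w -> y != z -> y \in t.
  rewrite -e mem_cat in_cons orbCA => /orP [/eqP -> |]; first by rewrite eqxx.
  by rewrite -mem_cat cat_take_drop.
have zNtake : z \notin take (c z) t by apply: contra zt; apply: mem_take.
have [xz|xz] := eqVneq x z.
  have zu : z \notin u.
    apply/count_memPn; move: (congr1 (count_mem z) e).
    rewrite !count_cat /= xz eqxx addnCA -count_cat cat_take_drop (count_memPn zt).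
    by move=> /=; lia.
  rewrite xz; have <- : size u = c z.
    move: (congr1 (index z) e); rewrite !index_cat /= xz eqxx (negbTE zu) (negbTE zNtake).
    by rewrite size_takel // !addn0.
  rewrite -(count_predT u); apply: eq_in_count => y yu /=.
  by rewrite zmin // mem_t // ?mem_cat ?yu //; apply: contraNneq zu => <-.
have Rxz : R x z = false.
  have xt : x \in t by apply: mem_t; rewrite // mem_cat mem_head orbT.
  by apply/negbTE/negP => Rxz; have := R_irr x; rewrite (R_trans Rxz (zmin x xt)).
have /ht <- : t = [seq y <- u | y != z] ++ x :: [seq y <- w | y != z].
  move: (congr1 (filter (predC1 z)) e); rewrite !filter_cat /= eqxx xz -filter_cat.
  rewrite cat_take_drop (all_filterP _) //; apply/allP => y yt.
  by apply: contraNneq zt => <-.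
rewrite count_filter; apply: eq_count => y /=.
by case: eqVneq => [->|]; rewrite ?Rxz ?andbT.
Qed.

Lemma exists_arranged (S : seq T) : uniq S ->
  (forall x, x \in S -> c x <= count (R x) S) -> exists2 t, perm_eq t S & arranged t.
Proof.
elim: {S}(size S) {-2}S (erefl (size S)) => [|k IH] S sizeS uS cS.
  by exists [::] => [|[]]; rewrite ?(size0nil sizeS).
have [z zS zmin] : exists2 z, z \in S & forall y, y \in S -> y != z -> R z y.
  by apply: exists_Rmin; case: S sizeS {uS cS}.
set S' := rem z S; have eS : perm_eq S (z :: S') := perm_to_rem zS.
have mem_S' y : (y \in S') = (y != z) && (y \in S) by rewrite (mem_rem_uniq z uS) inE.
have Rz_S' y : y \in S' -> R z y by rewrite mem_S' => /andP [yz /zmin]; apply.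
have RS'_z y : y \in S' -> R y z = false.
  by move=> /Rz_S' Rzy; apply/negbTE/negP => Ryz; have := R_irr z; rewrite (R_trans Rzy Ryz).
have [t tS' arr_t] : exists2 t, perm_eq t S' & arranged t.
  apply: IH; rewrite ?rem_uniq // ?size_rem // ?sizeS // => x xS'.
  have /andP [_ xS] : (x != z) && (x \in S) by rewrite -mem_S'.
  by have := cS x xS; rewrite (permP eS) /= RS'_z.
have zt : z \notin t by rewrite (perm_mem tS') mem_S' eqxx.
exists (take (c z) t ++ z :: drop (c z) t).
  by rewrite (permPr eS) -cat1s perm_catCA cat1s perm_cons cat_take_drop.
apply: arranged_insert => // [y|]; first by rewrite (perm_mem tS'); apply: Rz_S'.
have := cS z zS; rewrite (permP eS) /= R_irr (perm_size tS').
by move/leq_trans; apply; apply: count_size.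
Qed.
End Arrangement.

(* Peak, valley, double ascent, double descent: descent top only, descent bottom
   only, neither, both. *)
Definition step_of (dtop dbot : bool) : step :=
  match dtop, dbot with
  | true, false => D
  | false, true => U
  | false, false => Lb
  | true, true => Lr
  end.

Section PhiLastLetterOne.
Variables (n : nat) (rho : seq nat).
Hypotheses (rho_perm : perm_eq rho (iota 1 n.+2)) (rho_last : last 0 rho = 1).

Local Notation v := (Defs.val rho).
Local Notation F := (fword rho).
Local Notation G := (gword rho).
Local Notation F' := (fword' rho).
Local Notation G' := (gword' rho).

Lemma size_rho : size rho = n.+2.
Proof. by rewrite (perm_size rho_perm) size_iota. Qed.

Lemma rho_uniq : uniq rho.
Proof. by rewrite (perm_uniq rho_perm) iota_uniq. Qed.

Lemma mem_rho (x : nat) : (x \in rho) = (0 < x <= n.+2).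
Proof. by rewrite (perm_mem rho_perm) mem_iota; lia. Qed.

Lemma val_last : v n.+2 = 1.
Proof. by rewrite /= -rho_last -nth_last size_rho. Qed.

Lemma val_mem i : 0 < i <= n.+2 -> v i \in rho.
Proof. by case: i => [|i] // hi; rewrite /= mem_nth // size_rho. Qed.

Lemma val_leq i : v i <= n.+2.
Proof.
case: i => [|i] //=; case: (ltnP i n.+2) => hi; last by rewrite nth_default ?size_rho.
by have /= := @val_mem i.+1; rewrite mem_rho; lia.
Qed.

Lemma val_rho_inj i j : 0 < i <= n.+2 -> 0 < j <= n.+2 -> v i = v j -> i = j.
Proof.
case: i j => [|i] [|j] // hi hj /= /eqP; rewrite nth_uniq ?rho_uniq ?size_rho //.
by move=> /eqP ->.
Qed.

Lemma pos_bound (x : nat) : x \in rho -> 0 < pos rho x <= n.+2.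
Proof. by rewrite /pos -size_rho ltnS -index_mem. Qed.

Lemma val_pos (x : nat) : x \in rho -> v (pos rho x) = x.
Proof. exact: nth_index. Qed.

Lemma pos_val i : 0 < i <= n.+2 -> pos rho (v i) = i.
Proof. by case: i => [|i] // hi; rewrite /pos /= index_uniq ?rho_uniq // size_rho. Qed.

Lemma pos_1 : pos rho 1 = n.+2.
Proof. by rewrite -val_last pos_val ?leqnn. Qed.

Lemma pos_leq (y : nat) : y \in rho -> 1 < y -> pos rho y <= n.+1.
Proof.
move=> hy hy1; have := pos_bound hy; have := val_pos hy.
by case: (eqVneq (pos rho y) n.+2) => [->|]; rewrite ?val_last; lia.
Qed.

Lemma map_val_iota : map v (iota 1 n.+2) = rho.
Proof.
rewrite -{2}(mkseq_nth 0 rho) /mkseq size_rho (iotaDl 1 0) -map_comp.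
exact: eq_map.
Qed.

Lemma mem_select (Q : pred nat) (x : nat) : x \in rho ->
  (x \in [seq v i | i <- iota 1 (size rho) & Q i]) = Q (pos rho x).
Proof.
move=> hx; rewrite size_rho; apply/mapP/idP => [[i]|hQ].
  by rewrite mem_filter mem_iota => /andP [hQ hi] ->; rewrite pos_val //; lia.
exists (pos rho x); last by rewrite val_pos.
by rewrite mem_filter hQ mem_iota /=; have := pos_bound hx; lia.
Qed.

Lemma dtopsE (x : nat) : x \in rho -> 1 < x -> (x \in dtops rho) = (v (pos rho x).+1 < x).
Proof.
move=> hx hx1; rewrite mem_select // /dtopP size_rho val_pos //=.
by rewrite (pos_leq hx hx1).
Qed.

Lemma fwordE (x : nat) : x \in rho -> (x \in F) = (x < v (pos rho x).-1).
Proof.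
move=> hx; rewrite mem_sort mem_select // /dbotP val_pos //.
by case: (pos rho x) => [|[|k]].
Qed.

Lemma mem_ndtops (x : nat) : x \in rho -> (x \in ndtops rho) = (x \notin dtops rho).
Proof. by move=> hx; rewrite mem_select // (mem_select (dtopP rho)). Qed.

Lemma mem_gword (x : nat) : x \in rho -> (x \in G) = (x \notin F).
Proof. by move=> hx; rewrite !mem_sort mem_select // (mem_select (dbotP rho)). Qed.

Lemma one_notin_dtops : 1 \notin dtops rho.
Proof. by rewrite mem_select ?mem_rho // pos_1 /dtopP size_rho ltnn. Qed.

Lemma max_in_gword : n.+2 \in G.
Proof.
have hm : n.+2 \in rho by rewrite mem_rho leqnn.
by rewrite mem_gword // fwordE // -leqNgt val_leq.
Qed.

Definition descent j := v j.+1 < v j.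

Lemma count_dtops (P : pred nat) :
  count P (dtops rho) = count (fun j => descent j && P (v j)) (iota 1 n.+1).
Proof.
rewrite /dtops count_map count_filter size_rho (iota_rcons 1 n.+1) -cats1 count_cat.
rewrite [X in _ + X](_ : _ = 0) ?addn0; last by rewrite /= /dtopP size_rho ltnn andbF.
apply: eq_in_count => j; rewrite mem_iota => hj.
by rewrite /= /dtopP size_rho andbC (_ : j <= n.+1) //; lia.
Qed.

Lemma count_ndtops (P : pred nat) :
  count P (ndtops rho) = count (fun j => ~~ descent j && P (v j)) (iota 1 n.+1) + P 1.
Proof.
rewrite /ndtops count_map count_filter size_rho (iota_rcons 1 n.+1) -cats1 count_cat.
congr (_ + _); last by rewrite /= /dtopP size_rho ltnn andbT -val_last addn0.
apply: eq_in_count => j; rewrite mem_iota => hj.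
by rewrite /= /dtopP size_rho andbC (_ : j <= n.+1) //; lia.
Qed.

Lemma count_fword (P : pred nat) :
  count P F = count (fun j => descent j && P (v j.+1)) (iota 1 n.+1).
Proof.
rewrite (permP (permEl (perm_sort _ _))) count_map count_filter size_rho.
rewrite (iota_cons 1 n.+1) -cat1s count_cat count_map.
rewrite [X in X + _](_ : _ = 0) ?add0n; last by rewrite /= /dbotP andbF.
apply: eq_in_count => j; rewrite mem_iota => /andP [hj _].
by rewrite /= /dbotP ltnS hj andbC.
Qed.

Lemma count_gword (P : pred nat) :
  count P G = P (v 1) + count (fun j => ~~ descent j && P (v j.+1)) (iota 1 n.+1).
Proof.
rewrite (permP (permEl (perm_sort _ _))) count_map count_filter size_rho.
rewrite (iota_cons 1 n.+1) -cat1s count_cat count_map.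
congr (_ + _); first by rewrite /= /dbotP andbT addn0.
apply: eq_in_count => j; rewrite mem_iota => /andP [hj _].
by rewrite /= /dbotP ltnS hj andbC.
Qed.

Lemma cstatE (y : nat) : y \in rho ->
  cstat rho y = count (fun j => (pos rho y < j) && (v j.+1 < y < v j)) (iota 1 n.+1).
Proof.
rewrite /cstat size_rho /= => _; apply: eq_in_count => j; rewrite mem_iota => hj.
by rewrite (_ : j < n.+2) ?andbT //; lia.
Qed.

Lemma perm_dtops_ndtops : perm_eq (dtops rho ++ ndtops rho) rho.
Proof.
rewrite /dtops /ndtops -map_cat -[X in perm_eq _ X]map_val_iota size_rho perm_map //.
by rewrite (perm_filterC (dtopP rho)).
Qed.

Lemma perm_fword_gword : perm_eq (F ++ G) rho.
Proof.
rewrite (permPl (perm_cat (permEl (perm_sort _ _)) (permEl (perm_sort _ _)))).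
rewrite -map_cat -[X in perm_eq _ X]map_val_iota size_rho perm_map //.
by rewrite (perm_filterC (dbotP rho)).
Qed.

Lemma dtops_uniq : uniq (dtops rho).
Proof. by have := rho_uniq; rewrite -(perm_uniq perm_dtops_ndtops) cat_uniq => /andP []. Qed.

Lemma ndtops_uniq : uniq (ndtops rho).
Proof. by have := rho_uniq; rewrite -(perm_uniq perm_dtops_ndtops) cat_uniq => /and3P []. Qed.

Lemma fword_uniq : uniq F.
Proof. by have := rho_uniq; rewrite -(perm_uniq perm_fword_gword) cat_uniq => /andP []. Qed.

Lemma gword_uniq : uniq G.
Proof. by have := rho_uniq; rewrite -(perm_uniq perm_fword_gword) cat_uniq => /and3P []. Qed.

Lemma dtops_sub : {subset dtops rho <= rho}.
Proof. by move=> x hx; rewrite -(perm_mem perm_dtops_ndtops) mem_cat hx. Qed.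

Lemma ndtops_sub : {subset ndtops rho <= rho}.
Proof. by move=> x hx; rewrite -(perm_mem perm_dtops_ndtops) mem_cat hx orbT. Qed.

Lemma gword_sub : {subset G <= rho}.
Proof. by move=> x hx; rewrite -(perm_mem perm_fword_gword) mem_cat hx orbT. Qed.

Lemma fword_sorted : sorted ltn F.
Proof. by rewrite ltn_sorted_uniq_leq fword_uniq sort_sorted //; apply: leq_total. Qed.

Lemma gword_sorted : sorted ltn G.
Proof. by rewrite ltn_sorted_uniq_leq gword_uniq sort_sorted //; apply: leq_total. Qed.

Lemma cstat_upcrossings (y : nat) : y \in rho -> 1 < y ->
  cstat rho y = count (fun j => (pos rho y < j) && (v j < y < v j.+1)) (iota 1 n.+1)
                + (y \notin dtops rho).
Proof.
move=> hy hy1; have hk := pos_bound hy; have hk' := pos_leq hy hy1.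
rewrite cstatE // dtopsE // -leqNgt.
set k := pos rho y in hk hk' *; have vk : v k = y by apply: val_pos.
have vNy j : k < j <= n.+2 -> v j != y.
  by move=> hj; apply/eqP; rewrite -vk => /val_rho_inj; lia.
have hk1 : 1 <= k.+1 <= 1 + n.+1 by lia.
have -> : count (fun j => (k < j) && (v j.+1 < y < v j)) (iota 1 n.+1) =
          count (fun j => (v j.+1 < y) && (y <= v j)) (iota k.+1 (n.+1 - k)).
  rewrite count_iota_geq // (_ : 1 + n.+1 - k.+1 = n.+1 - k); last by lia.
  by apply: eq_in_count => j; rewrite mem_iota => hj; have := vNy j; lia.
have -> : count (fun j => (k < j) && (v j < y < v j.+1)) (iota 1 n.+1) =
          count (fun j => (v j < y) && (y <= v j.+1)) (iota k.+1 (n.+1 - k)).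
  rewrite count_iota_geq // (_ : 1 + n.+1 - k.+1 = n.+1 - k); last by lia.
  by apply: eq_in_count => j; rewrite mem_iota => hj; have := vNy j.+1; lia.
have := count_up_down_crossings v y k.+1 (n.+1 - k).
rewrite (_ : k.+1 + (n.+1 - k) = n.+2); last by lia.
by rewrite val_last (leqNgt y 1) hy1 addn0 => <-.
Qed.

Lemma cstat_1 : cstat rho 1 = 0.
Proof.
rewrite cstatE ?mem_rho //; apply/eqP; rewrite eqn0Ngt -has_count; apply/hasPn => j.
by rewrite mem_iota => hj; have /= := @val_mem j.+1; rewrite mem_rho; lia.
Qed.

Lemma cstat_gt0 (y : nat) : y \in rho -> 1 < y -> y \notin dtops rho -> 0 < cstat rho y.
Proof. by move=> hy hy1 hyD; rewrite cstat_upcrossings // hyD addn1. Qed.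

Lemma cstat_leq_count_gtn_dtops (y : nat) : y \in rho ->
  cstat rho y <= count (fun z => y < z) (dtops rho).
Proof.
by move=> hy; rewrite count_dtops cstatE //; apply: sub_count => j; rewrite /descent /=; lia.
Qed.

Lemma count_ltn_fword (y : nat) : y \in dtops rho ->
  count (fun z => z < y) (dtops rho) + cstat rho y < count (fun z => z < y) F.
Proof.
move=> yD; have yr := dtops_sub yD.
have y1 : 1 < y.
  by move: yr yD; rewrite mem_rho; case: y => [|[|y]] //; rewrite (negbTE one_notin_dtops).
have hk := pos_bound yr; have hk' := pos_leq yr y1; have vk := val_pos yr.
move: yD; rewrite dtopsE // count_dtops count_fword cstatE //.
set k := pos rho y in hk hk' vk * => vk1.
have one_k : count (pred1 k) (iota 1 n.+1) = 1.
  by rewrite count_uniq_mem ?iota_uniq // mem_iota; lia.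
rewrite -addn1 -[X in _ + X <= _]one_k !count_sumE -!big_split.
(* If the top [v j] of a descent [j] is below [y], or [j] crosses [y] after [pos rho y],
   or [j = pos rho y], then its bottom [v j.+1] is below [y]; the cases are disjoint. *)
rewrite big_seq [X in _ <= X]big_seq; apply: leq_sum => j.
rewrite mem_iota /descent /= => hj; case: (eqVneq j k) => [->|jk]; last by lia.
by rewrite vk; move: vk1 => /=; lia.
Qed.

Lemma count_ltn_gword (y : nat) : y \in rho -> 1 < y ->
  count (fun z => z < y) G + cstat rho y <= count (fun z => z < y) (ndtops rho).
Proof.
move=> hy hy1; rewrite count_gword count_ndtops cstatE // hy1.
have := count_up_down_crossings v y 1 n.+1.
rewrite (_ : 1 + n.+1 = n.+2) // val_last (leqNgt y 1) hy1 addn0 => balance.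
(* For an ascent [j], [v j < y] iff [v j.+1 < y] or [j] is a weak up-crossing of [y];
   and [c y] is at most the number of weak down-crossings. *)
have : count (fun j => ~~ descent j && (v j.+1 < y)) (iota 1 n.+1) +
       count (fun j => (v j < y) && (y <= v j.+1)) (iota 1 n.+1) =
       count (fun j => ~~ descent j && (v j < y)) (iota 1 n.+1).
  by rewrite !count_sumE -big_split; apply: eq_bigr => j _; rewrite /descent /=; lia.
have : count (fun j => (pos rho y < j) && (v j.+1 < y < v j)) (iota 1 n.+1) <=
       count (fun j => (v j.+1 < y) && (y <= v j)) (iota 1 n.+1).
  by apply: sub_count => j /=; lia.
lia.
Qed.

(* [fword'] is the head of a filtered list of permutations, the empty word if that list
   is empty: it has its defining property only once some arrangement is known to exist. *)
Lemma fword'_spec : perm_eq F' (dtops rho) /\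
  {in F', forall x,
    count (fun y => x < y) (take (index x F') F') = cstat rho x}.
Proof.
have [t tD arr_t] : exists2 t, perm_eq t (dtops rho) & arranged ltn (cstat rho) t.
  apply: (@exists_arranged _ ltn _ ltnn ltn_trans) dtops_uniq _ => [x y|x /dtops_sub].
    by rewrite neq_ltn.
  exact: cstat_leq_count_gtn_dtops.
have /(head_filter [::]) /andP [/allP F'c] : has (fun t =>
    all (fun x => count (fun y => x < y) (take (index x t) t) == cstat rho x) t)
    (permutations (dtops rho)).
  apply/hasP; exists t; first by rewrite mem_permutations.
  by apply/allP => x xt; rewrite (arranged_take_index arr_t).
by rewrite mem_permutations; split=> // x /F'c /eqP.
Qed.

Lemma gword'_spec : perm_eq G' (ndtops rho) /\
  {in G', forall x,
    count (fun y => y < x) (drop (index x G').+1 G') = cstat rho x}.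
Proof.
have [t tN arr_t] : exists2 t, perm_eq t (ndtops rho) & arranged (fun x y => y < x) (cstat rho) t.
  apply: (@exists_arranged _ (fun x y => y < x) _ ltnn) ndtops_uniq _ => [y x z|x y|x xN].
  - by move=> h1 h2; apply: ltn_trans h2 h1.
  - by rewrite neq_ltn orbC.
  have xr := ndtops_sub xN; case: (ltnP 1 x) => x1; last first.
    by rewrite (_ : x = 1) ?cstat_1 //; move: xr; rewrite mem_rho; lia.
  by have := count_ltn_gword xr x1; rewrite /=; lia.
have /(head_filter [::]) /andP [/allP G'c] : has (fun t =>
    all (fun x => count (fun y => y < x) (drop (index x t).+1 t) == cstat rho x) t)
    (permutations (ndtops rho)).
  apply/hasP; exists (rev t); first by rewrite mem_permutations perm_rev.
  by apply/allP => x xt; rewrite (arranged_rev_drop_index arr_t).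
by rewrite mem_permutations; split=> // x /G'c /eqP.
Qed.

Lemma fword'_perm : perm_eq F' (dtops rho). Proof. by case: fword'_spec. Qed.
Lemma gword'_perm : perm_eq G' (ndtops rho). Proof. by case: gword'_spec. Qed.

Lemma fword'_count (x : nat) : x \in F' ->
  count (fun y => x < y) (take (index x F') F') = cstat rho x.
Proof. by case: fword'_spec => _; apply. Qed.

Lemma gword'_count (x : nat) : x \in G' ->
  count (fun y => y < x) (drop (index x G').+1 G') = cstat rho x.
Proof. by case: gword'_spec => _; apply. Qed.

Lemma fword'_uniq : uniq F'. Proof. by rewrite (perm_uniq fword'_perm) dtops_uniq. Qed.
Lemma gword'_uniq : uniq G'. Proof. by rewrite (perm_uniq gword'_perm) ndtops_uniq. Qed.

Lemma size_fword' : size F' = size F.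
Proof.
rewrite (perm_size fword'_perm) -!count_predT count_dtops count_fword.
by apply: eq_count => j; rewrite !andbT.
Qed.

Lemma size_fword_gword : size F + size G = n.+2.
Proof. by rewrite -size_cat (perm_size perm_fword_gword) size_rho. Qed.

Lemma size_gword' : size G' = size G.
Proof.
apply/eqP; rewrite -(eqn_add2l (size F)) size_fword_gword -size_fword'.
rewrite (perm_size fword'_perm) (perm_size gword'_perm) -size_cat.
by rewrite (perm_size perm_dtops_ndtops) size_rho.
Qed.

Lemma fword_ltn_fword' q : q < size F -> nth 0 F q < nth 0 F' q.
Proof.
rewrite -size_fword' => hq; set y := nth 0 F' q.
have yF' : y \in F' by apply: mem_nth.
have yD : y \in dtops rho by rewrite -(perm_mem fword'_perm).
have idx_y : index y F' = q by rewrite index_uniq ?fword'_uniq.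
have : q = cstat rho y + count (fun z => z < y) (take q F').
  rewrite -{1}(size_takel (ltnW hq)) -fword'_count // idx_y.
  by apply: size_count_gtn_ltn; rewrite -idx_y notin_take_index.
have : count (fun z => z < y) (take q F') <= count (fun z => z < y) (dtops rho).
  by rewrite -(permP fword'_perm) -{2}(cat_take_drop q F') count_cat leq_addr.
have := count_ltn_fword yD.
by rewrite sorted_nth_ltn_count ?fword_sorted -?size_fword' //; lia.
Qed.

Lemma gword'_leq_gword p : p < size G -> nth 0 G' p <= nth 0 G p.
Proof.
rewrite -size_gword' => hp; set y := nth 0 G' p.
have yG' : y \in G' by apply: mem_nth.
have yN : y \in ndtops rho by rewrite -(perm_mem gword'_perm).
have Gp_rho : nth 0 G p \in rho by rewrite gword_sub // mem_nth -?size_gword'.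
case: (ltnP 1 y) => y1; last by move: Gp_rho; rewrite mem_rho; lia.
have := count_ltn_gword (ndtops_sub yN) y1.
rewrite -(permP gword'_perm) -{1}(cat_take_drop p G') (drop_nth 0 hp) count_cat /= ltnn.
have := gword'_count yG'; rewrite index_uniq ?gword'_uniq // => ->.
have : count (fun z => z < y) (take p G') <= p.
  by apply: leq_trans (count_size _ _) _; rewrite size_take; case: ltnP.
move=> take_p Gy; rewrite leqNgt sorted_nth_ltn_count ?gword_sorted -?size_gword' //; lia.
Qed.

(* The bottom row [f'g'] and the top row [fg] of the array; [tau] is [Phi rho] read as a
   function, and [tauV] its inverse. *)
Local Notation A := (F' ++ G').
Local Notation B := (F ++ G).
Definition tau b := nth 0 B (index b A).
Definition tauV x := nth 0 A (index x B).

Lemma perm_bottom_row : perm_eq A rho.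
Proof. exact: perm_trans (perm_cat fword'_perm gword'_perm) perm_dtops_ndtops. Qed.

Lemma size_bottom_row : size A = n.+2.
Proof. by rewrite (perm_size perm_bottom_row) size_rho. Qed.

Lemma size_top_row : size B = n.+2.
Proof. by rewrite (perm_size perm_fword_gword) size_rho. Qed.

Lemma mem_bottom_row (x : nat) : (x \in A) = (x \in rho).
Proof. exact: perm_mem perm_bottom_row x. Qed.

Lemma mem_top_row (x : nat) : (x \in B) = (x \in rho).
Proof. exact: perm_mem perm_fword_gword x. Qed.

Lemma bottom_row_uniq : uniq A.
Proof. by rewrite (perm_uniq perm_bottom_row) rho_uniq. Qed.

Lemma top_row_uniq : uniq B.
Proof. by rewrite (perm_uniq perm_fword_gword) rho_uniq. Qed.

Lemma column_ltn q : q < n.+2 -> (nth 0 B q < nth 0 A q) = (q < size F).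
Proof.
move=> hq; rewrite !nth_cat size_fword'.
case: (ltnP q (size F)) => h; first exact: fword_ltn_fword'.
apply/negbTE; rewrite -leqNgt; apply: gword'_leq_gword.
by have := size_fword_gword; lia.
Qed.

Lemma dtops_index (x : nat) : x \in rho -> (x \in dtops rho) = (index x A < size F).
Proof.
move=> hx; rewrite -(perm_mem fword'_perm) index_cat -size_fword'.
by case: ifP => [xF'|_]; [rewrite index_mem | rewrite ltnNge leq_addr].
Qed.

Lemma fword_index (x : nat) : x \in rho -> (x \in F) = (index x B < size F).
Proof.
move=> hx; rewrite index_cat.
by case: ifP => [xF|_]; [rewrite index_mem | rewrite ltnNge leq_addr].
Qed.

Lemma tau_nth q : q < n.+2 -> tau (nth 0 A q) = nth 0 B q.
Proof. by move=> hq; rewrite /tau index_uniq ?bottom_row_uniq ?size_bottom_row. Qed.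

Lemma tauV_mem (x : nat) : x \in rho -> tauV x \in rho.
Proof.
move=> hx; rewrite -mem_bottom_row /tauV mem_nth //.
by rewrite size_bottom_row -size_top_row index_mem mem_top_row.
Qed.

Lemma tauK (x : nat) : x \in rho -> tau (tauV x) = x.
Proof.
move=> hx; rewrite /tauV tau_nth ?nth_index ?mem_top_row //.
by rewrite -size_top_row index_mem mem_top_row.
Qed.

Lemma tau_inj (x y : nat) : x \in rho -> y \in rho -> tau x = tau y -> x = y.
Proof.
move=> hx hy e; have := congr1 tauV e; rewrite /tauV /tau.
rewrite !index_uniq ?top_row_uniq ?size_top_row -?size_bottom_row ?index_mem ?mem_bottom_row //.
by rewrite !nth_index ?mem_bottom_row.
Qed.

Lemma leq_tau (x : nat) : x \in rho -> (x <= tau x) = (x \notin dtops rho).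
Proof.
move=> hx; rewrite leqNgt dtops_index // -column_ltn ?nth_index ?mem_bottom_row //.
by rewrite -size_bottom_row index_mem mem_bottom_row.
Qed.

Lemma ltn_tauV (x : nat) : x \in rho -> (x < tauV x) = (x \in F).
Proof.
move=> hx; rewrite fword_index // -column_ltn /tauV ?nth_index ?mem_top_row //.
by rewrite -size_top_row index_mem mem_top_row.
Qed.

Lemma last_gword' : last 0 G' = 1.
Proof.
have oneG' : 1 \in G' by rewrite (perm_mem gword'_perm) mem_ndtops ?mem_rho // one_notin_dtops.
have G'u := gword'_uniq; have G'c := @gword'_count.
case eG': G' oneG' G'u G'c => [//|g s] _ G'u G'c /=.
have zG' : last g s \in g :: s by apply: mem_last.
have zr : last g s \in rho by rewrite -mem_bottom_row mem_cat eG' zG' orbT.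
have zN : last g s \notin dtops rho by rewrite -mem_ndtops // -(perm_mem gword'_perm) eG'.
have := G'c _ zG'; rewrite index_last // drop_oversize //= => c0.
case: (ltnP 1 (last g s)) => [z1|]; first by have := cstat_gt0 zr z1 zN; rewrite -c0.
by move: zr; rewrite mem_rho; lia.
Qed.

Lemma index_1_bottom_row : index 1 A = n.+1.
Proof.
have oneF' : 1 \notin F' by rewrite (perm_mem fword'_perm) one_notin_dtops.
rewrite index_cat (negbTE oneF').
have := size_bottom_row; have := gword'_uniq; have := last_gword'.
rewrite size_cat; case: G' => [//|g s] last1 G'u.
by rewrite -last1 [last 0 _]/= index_last //= addnS => /succn_inj.
Qed.

Lemma last_gword : last 0 G = n.+2.
Proof.
apply/eqP; rewrite eqn_leq sorted_leq_last ?gword_sorted ?max_in_gword // andbT.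
have := max_in_gword; case eG: G => [//|g s] _ /=.
have : last g s \in rho by rewrite gword_sub // eG mem_last.
by rewrite mem_rho => /andP [].
Qed.

Lemma tau_1 : tau 1 = n.+2.
Proof.
have G0 : 0 < size G by case: G max_in_gword.
rewrite -last_gword -nth_last /tau index_1_bottom_row nth_cat.
have := size_fword_gword; have [hF e|hF e] := ltnP n.+1 (size F); first lia.
by apply: (congr1 (nth 0 G)); lia.
Qed.

Local Notation pi := (behead (Phi rho)).

Lemma behead_Phi : pi = [seq tau j.+1 | j <- iota 1 n.+1].
Proof.
rewrite /Phi size_rho (iota_cons 1 n.+1).
by rewrite /= -map_comp.
Qed.

Lemma val_behead_Phi i : 0 < i <= n.+1 -> Defs.val pi i = tau i.+1.
Proof.
case: i => [|i] // hi; rewrite /= behead_Phi (nth_map 0) ?size_iota ?nth_iota //; lia.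
Qed.

Lemma behead_Phi_uniq : uniq pi.
Proof.
rewrite behead_Phi map_inj_in_uniq ?iota_uniq // => a b; rewrite !mem_iota => ha hb.
by move=> e; apply: succn_inj; apply: (tau_inj _ _ e); rewrite mem_rho; lia.
Qed.

Lemma pos_behead_Phi (x : nat) : x \in rho -> x != n.+2 -> pos pi x = (tauV x).-1.
Proof.
move=> hx xn; have := tauV_mem hx; rewrite mem_rho => htV.
have tV1 : tauV x != 1 by apply: contraNneq xn => e; rewrite -(tauK hx) e tau_1.
have hi : tauV x - 2 < size pi by rewrite behead_Phi size_map size_iota; lia.
have e : nth 0 pi (tauV x - 2) = x.
  rewrite behead_Phi (nth_map 0) ?size_iota ?nth_iota; try lia.
  by rewrite (_ : (1 + (tauV x - 2)).+1 = tauV x) ?tauK //; lia.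
by rewrite /pos -{1}e index_uniq ?behead_Phi_uniq //; lia.
Qed.

Lemma stepYZL_behead_Phi i : 0 < i <= n ->
  stepYZL pi i = step_of (i.+1 \in dtops rho) (i.+1 \in F).
Proof.
move=> hi; have hx : i.+1 \in rho by rewrite mem_rho; lia.
rewrite /stepYZL val_behead_Phi ?pos_behead_Phi //; try lia.
have -> : i < tau i.+1 = (i.+1 \notin dtops rho) by rewrite -leq_tau.
have -> : i.+1 <= (tauV i.+1).-1 = (i.+1 \in F).
  by rewrite -ltn_tauV //; have := tauV_mem hx; rewrite mem_rho; lia.
by case: (_ \in dtops rho); case: (_ \in F).
Qed.

(* The nesting condition of [nest] for [behead (Phi rho)], both indices shifted by one:
   [x = i.+1] and [J = j.+1]. *)
Definition nested x J := ((J < x) && (x <= tau x) && (tau x < tau J))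
                         || ((tau J < tau x) && (tau x < x) && (x < J)).

Lemma nest_behead_Phi_columns i : 0 < i <= n -> nest n pi i =
  count (fun q => (nth 0 A q != 1) && nested i.+1 (nth 0 A q)) (iota 0 n.+2).
Proof.
move=> hi; rewrite /nest (@eq_in_count _ _ (fun j => nested i.+1 j.+1)); last first.
  by move=> j; rewrite mem_iota => hj; rewrite !val_behead_Phi ?ltnS //; lia.
rewrite -(count_map succn (nested i.+1)) -iotaS_map.
transitivity (count (fun J => (J != 1) && nested i.+1 J) (iota 1 n.+2)).
  rewrite (_ : iota 1 n.+2 = [:: 1] ++ iota 2 n.+1) // count_cat [count _ [:: 1]]/= add0n.
  by apply: eq_in_count => J; rewrite mem_iota => hJ; rewrite (_ : J != 1) //; lia.
by rewrite -(permP (perm_trans perm_bottom_row rho_perm)) (count_nth 0 _ A) size_bottom_row.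
Qed.

Lemma nested_column_dtop (x : nat) q : x \in dtops rho -> q < n.+2 ->
  (nth 0 A q != 1) && nested x (nth 0 A q) = (q < index x A) && (x < nth 0 F' q).
Proof.
move=> xD hq; have xr := dtops_sub xD; have := xD; rewrite dtops_index // => q0F.
have tx : tau x = nth 0 F (index x A) by rewrite /tau nth_cat q0F.
have txx : tau x < x by rewrite ltnNge leq_tau // xD.
rewrite /nested tau_nth // (leqNgt x) txx andbF /= andbT.
case: (ltnP q (size F)) => qF.
  rewrite tx [nth 0 A q]nth_cat size_fword' qF nth_cat qF sorted_ltn_nthE ?fword_sorted //.
  lia.
have := column_ltn hq; rewrite (ltnNge q) qF /= => /negbT; rewrite -leqNgt; lia.
Qed.

Lemma nested_column_ndtop (x : nat) q : x \in rho -> x \notin dtops rho -> q < n.+2 ->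
  (nth 0 A q != 1) && nested x (nth 0 A q)
  = (index x A < q) && ((nth 0 A q != 1) && (nth 0 A q < x)).
Proof.
move=> xr xD hq; have := xD; rewrite dtops_index // -leqNgt => Fq0.
have q0n : index x A < n.+2 by rewrite -size_bottom_row index_mem mem_bottom_row.
have tx : tau x = nth 0 G (index x A - size F) by rewrite /tau nth_cat ltnNge Fq0.
have xtx : x <= tau x by rewrite leq_tau.
rewrite /nested tau_nth // xtx (ltnNge (tau x) x) xtx /= andbF orbF andbT.
case: (ltnP q (size F)) => qF; first by have := column_ltn hq; rewrite qF; lia.
have := size_fword_gword => sFG.
rewrite tx [nth 0 (F ++ G) q]nth_cat (ltnNge q) qF /= sorted_ltn_nthE ?gword_sorted; lia.
Qed.

Lemma count_nested_dtop (x : nat) : x \in dtops rho ->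
  count (fun q => (nth 0 A q != 1) && nested x (nth 0 A q)) (iota 0 n.+2) = cstat rho x.
Proof.
move=> xD; rewrite (eq_in_count (a2 := fun q => (q < index x A) && (x < nth 0 F' q))); last first.
  by move=> q; rewrite mem_iota => hq; apply: nested_column_dtop.
have xF' : x \in F' by rewrite (perm_mem fword'_perm).
have idx : index x A = index x F' by rewrite index_cat xF'.
have q0n : index x A < n.+2 by rewrite -size_bottom_row index_mem mem_bottom_row dtops_sub.
rewrite count_iota_ltn; last by lia.
by rewrite idx subn0 -(count_take_nth 0) ?fword'_count // ltnW // index_mem.
Qed.

Lemma count_nested_ndtop (x : nat) : x \in rho -> 1 < x -> x \notin dtops rho ->
  count (fun q => (nth 0 A q != 1) && nested x (nth 0 A q)) (iota 0 n.+2) = (cstat rho x).-1.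
Proof.
move=> xr x1 xD.
have q0n : index x A < n.+2 by rewrite -size_bottom_row index_mem mem_bottom_row.
rewrite (eq_in_count (a2 := fun q => (index x A < q) && ((nth 0 A q != 1) && (nth 0 A q < x))));
  last by move=> q; rewrite mem_iota => hq; apply: nested_column_ndtop.
have xG' : x \in G' by rewrite (perm_mem gword'_perm) mem_ndtops.
have xF' : x \notin F' by rewrite (perm_mem fword'_perm).
have idx : index x A = size F' + index x G' by rewrite index_cat (negbTE xF').
rewrite count_iota_geq; last by lia.
rewrite add0n -size_bottom_row -(count_drop_nth 0 (fun y => (y != 1) && (y < x))).
rewrite drop_cat idx ifN; last by lia.
rewrite -addnS addKn count_predD1 ?drop_uniq ?gword'_uniq ?gword'_count //.
by rewrite -last_gword'; apply: last_in_drop_index; rewrite // last_gword'; lia.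
Qed.

Lemma nest_behead_Phi i : 0 < i <= n ->
  nest n pi i = cstat rho i.+1 - (i.+1 \notin dtops rho).
Proof.
move=> hi; have xr : i.+1 \in rho by rewrite mem_rho; lia.
rewrite nest_behead_Phi_columns //; have [xD|xD] := boolP (i.+1 \in dtops rho).
  by rewrite count_nested_dtop // subn0.
by rewrite count_nested_ndtop //; lia.
Qed.

End PhiLastLetterOne.

Section Rhohat.
Variables (n : nat) (sigma : seq nat).
Hypothesis sigma_perm : perm_eq sigma (iota 1 n.+1).

Local Notation rho := (rhohat sigma).
Local Notation v := (Defs.val (rhohat sigma)).

Lemma size_sigma : size sigma = n.+1.
Proof. by rewrite (perm_size sigma_perm) size_iota. Qed.

Lemma rhohat_perm : perm_eq rho (iota 1 n.+2).
Proof. by rewrite /rhohat perm_rcons iota_cons perm_cons perm_map. Qed.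

Lemma rhohat_last : last 0 rho = 1.
Proof. by rewrite /rhohat last_rcons. Qed.

Lemma val_rhohat i : 0 < i <= n.+1 -> v i = (Defs.val sigma i).+1.
Proof.
case: i => [|i] // /andP [_ hi] /=.
by rewrite /rhohat nth_rcons size_map size_sigma hi (nth_map 0) ?size_sigma.
Qed.

Lemma pos_rhohat i : 0 < i <= n.+1 -> pos rho i.+1 = pos sigma i.
Proof.
move=> hi; have his : i \in sigma by rewrite (perm_mem sigma_perm) mem_iota; lia.
rewrite /pos /rhohat -cats1 index_cat mem_map ?his; last exact: succn_inj.
by rewrite index_map //; exact: succn_inj.
Qed.

Lemma compare_val_rhohat j i : 0 < i -> j <= n.+2 ->
  ((Defs.val sigma j < i) = (v j < i.+1)) /\ ((i < Defs.val sigma j) = (i.+1 < v j)).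
Proof.
move=> hi hj; case: (ltnP j n.+2) => hjn; last first.
  rewrite (_ : j = n.+2) ?(val_last rhohat_perm rhohat_last) /= ?nth_default ?size_sigma //; lia.
case: j hj hjn => [|j] hj hjn; first by rewrite /= hi.
by rewrite val_rhohat //; lia.
Qed.

Lemma stepFV_rhohat i : 0 < i <= n ->
  stepFV sigma i = step_of (i.+1 \in dtops rho) (i.+1 \in fword rho).
Proof.
move=> hi; have xr : i.+1 \in rho by rewrite (mem_rho rhohat_perm rhohat_last); lia.
have x1 : 1 < i.+1 by lia.
have hk := pos_leq rhohat_perm rhohat_last xr x1.
rewrite /stepFV -pos_rhohat; last by lia.
rewrite (dtopsE rhohat_perm rhohat_last) // (fwordE rhohat_perm rhohat_last) //.
set k := pos rho i.+1 in hk *.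
have i0 : 0 < i by lia.
have [-> ->] := @compare_val_rhohat k.-1 i i0 (leq_trans (leq_pred k) (leqW hk)).
have [-> ->] := @compare_val_rhohat k.+1 i i0 hk.
have vk : v k = i.+1 by rewrite /k val_pos.
have k0 : 0 < k by have := pos_bound rhohat_perm xr; lia.
have vNx j : j != k -> j <= n.+2 -> v j != i.+1.
  case: j => [|j] jk hj //; apply: contra jk => /eqP; rewrite -vk => e.
  by apply/eqP; apply: (val_rho_inj rhohat_perm _ _ e); lia.
have n1 : v k.-1 != i.+1 by apply: vNx; lia.
have n2 : v k.+1 != i.+1 by apply: vNx; lia.
by move: n1 n2; case: (ltngtP (v k.-1) i.+1); case: (ltngtP (v k.+1) i.+1).
Qed.

Lemma pFV_rhohat i : 0 < i <= n ->
  pFV n sigma i = cstat rho i.+1 - (i.+1 \notin dtops rho).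
Proof.
move=> hi; have xr : i.+1 \in rho by rewrite (mem_rho rhohat_perm rhohat_last); lia.
have i0 : 0 < i by lia.
rewrite (cstat_upcrossings rhohat_perm rhohat_last xr) ?addnK; last by lia.
rewrite /pFV -pos_rhohat; last by lia.
rewrite (iota_cons 0 n.+1) -cat1s count_cat [count _ [:: 0]]/= add0n -iotaS_map.
apply: eq_in_count => j; rewrite mem_iota => hj.
have hjn : j < n.+2 by lia.
have [-> _] := @compare_val_rhohat j i i0 (ltnW hjn).
have [_ ->] := @compare_val_rhohat j.+1 i i0 hjn.
case: (ltnP j n.+1) => hj1; first by rewrite andbT.
by rewrite (_ : j = n.+1) ?(val_last rhohat_perm rhohat_last) ?andbF //; lia.
Qed.

End Rhohat.

Theorem theorem2p5 (n : nat) (hn : 1 <= n) (sigma : seq nat)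
  (hsigma : perm_eq sigma (iota 1 n.+1)) :
  psiFV n sigma = psiYZL n (Psi sigma).
Proof.
have rho_perm := rhohat_perm hsigma; have rho_last := rhohat_last sigma.
rewrite /psiFV /psiYZL /Psi; congr pair; apply/eq_in_map => i; rewrite mem_iota => hi.
  by rewrite (stepFV_rhohat hsigma) ?(stepYZL_behead_Phi rho_perm rho_last) //; lia.
by rewrite (pFV_rhohat hsigma) ?(nest_behead_Phi rho_perm rho_last) //; lia.
Qed.
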